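(* Let $u$ and $v$ be non-adjacent vertices in a prime $\overline{P_5}$-free graph $G$. Then either $N(u)\cap N(v)$ is a clique, or there exist a vertex $w\in V(G)\setminus (N(u)\cup N(v)\cup\{u,v\})$ and a set $A\subseteq N(u)\cap N(v)$ such that $G[A]$ is anticonnected and $w$ is mixed on $A$.
   Context: All graphs are finite and simple. $N(x)$ is the set of neighbors of $x$. $P_5$ is the path on five vertices and $\overline{P_5}$ its complement; $G$ is $H$-free if it has no induced subgraph isomorphic to $H$. A graph is anticonnected if its complement is connected. A vertex $b\notin X$ is mixed on $X$ if it has both a neighbor and a non-neighbor in $X$. A homogeneous set is a set $X\subseteq V(G)$ with $1<|X|<|V(G)|$ such that no vertex outside $X$ is mixed on $X$. $G$ is prime if $|V(G)|\ge4$ and has no homogeneous set. *)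

From mathcomp Require Import all_boot.
Set Implicit Arguments. Unset Strict Implicit. Unset Printing Implicit Defensive.

Definition simple_graph (T : finType) (adj : rel T) : Prop :=
  symmetric adj /\ irreflexive adj.

Definition nbhd (T : finType) (adj : rel T) (x : T) : {set T} := [set y | adj x y].

Definition p5_adj (i j : 'I_5) : bool := (i.+1 == j) || (j.+1 == i).

Definition p5bar_adj (i j : 'I_5) : bool := (i != j) && ~~ p5_adj i j.

Definition has_induced (T : finType) (adj : rel T) (n : nat) (hadj : rel 'I_n) : Prop :=
  exists f : 'I_n -> T, injective f /\ forall i j, i != j -> adj (f i) (f j) = hadj i j.

Definition P5bar_free (T : finType) (adj : rel T) : Prop :=
  ~ has_induced adj p5bar_adj.

Definition mixed (T : finType) (adj : rel T) (b : T) (X : {set T}) : Prop :=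
  b \notin X /\ (exists2 x, x \in X & adj b x) /\ (exists2 y, y \in X & ~~ adj b y).

Definition homogeneous (T : finType) (adj : rel T) (X : {set T}) : Prop :=
  1 < #|X| < #|T| /\ forall b, b \notin X -> ~ mixed adj b X.

Definition prime_graph (T : finType) (adj : rel T) : Prop :=
  4 <= #|T| /\ forall X : {set T}, ~ homogeneous adj X.

Definition is_clique (T : finType) (adj : rel T) (A : {set T}) : Prop :=
  forall x y, x \in A -> y \in A -> x != y -> adj x y.

Definition coadj_in (T : finType) (adj : rel T) (A : {set T}) : rel T :=
  fun x y => [&& x \in A, y \in A, x != y & ~~ adj x y].

Definition anticonnected (T : finType) (adj : rel T) (A : {set T}) : Prop :=
  A != set0 /\ forall x y, x \in A -> y \in A -> connect (coadj_in adj A) x y.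

From mathcomp Require Import all_boot.
From Stdlib Require Import Classical.

Set Implicit Arguments.
Unset Strict Implicit.
Unset Printing Implicit Defensive.

(* Let C = N(u) ∩ N(v) and suppose C is not a clique, so C
   contains two distinct non-adjacent vertices x, y.  Let A be the
   anticomponent of C containing x: the vertices reachable from x by
   non-edges of G[C].  Then A is anticonnected, A ⊆ C and x, y ∈ A, so
   1 < |A| < |V(G)| (u ∉ A); as G is prime some vertex z is mixed on A.
   Since A is anticonnected, z distinguishes the ends of some non-edge ab
   of G[A].  The vertex z is not in C, for otherwise z would be joined to
   A by a non-edge of G[C] and lie in A.  If z were adjacent to exactly one
   of u, v, say u, then a-b-z-v-u would be an induced P5 in the complement,
   i.e. an induced P5bar of G.  Hence z is adjacent to neither u nor v, and
   w := z is the required vertex. *)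

Lemma connect_switch (T : finType) (r : rel T) (P : pred T) (a b : T) :
  connect r a b -> P a -> ~~ P b -> exists x y, [/\ r x y, P x & ~~ P y].
Proof.
move=> /connectP [p pth ->]; elim: p a pth => [|c p IH] a /=; first by move=> _ ->.
case/andP=> rac pth Pa; case Pc: (P c); first exact: IH.
by move=> _; exists a, c; rewrite Pc.
Qed.

Lemma connect_restrict (T : finType) (e : rel T) (A : {set T}) (x y : T) :
  x \in A -> (forall a b, a \in A -> e a b -> b \in A) -> connect e x y ->
  connect [rel a b | [&& a \in A, b \in A & e a b]] x y.
Proof.
move=> xA clA /connectP [p pth ->]; elim: p x xA pth => [|c p IH] x xA /=.
  by rewrite connect0.
case/andP=> exc pth; have cA := clA _ _ xA exc.
by apply: connect_trans (connect1 _) (IH _ cA pth); rewrite /= xA cA exc.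
Qed.

Section Graph.

Variables (T : finType) (adj : rel T).
Hypotheses (adj_sym : symmetric adj) (adj_irr : irreflexive adj).

Lemma separated_by {x y z : T} : adj x z -> ~~ adj y z -> x != y.
Proof. by move=> xz; apply: contraNneq => <-. Qed.

Lemma adj_neq (x y : T) : adj x y -> x != y.
Proof. by move=> xy; apply: separated_by xy _; rewrite adj_irr. Qed.

Lemma p5bar_of_copath (t0 t1 t2 t3 t4 : T) :
  ~~ adj t0 t1 -> ~~ adj t1 t2 -> ~~ adj t2 t3 -> ~~ adj t3 t4 ->
  adj t0 t2 -> adj t0 t3 -> adj t0 t4 -> adj t1 t3 -> adj t1 t4 -> adj t2 t4 ->
  has_induced adj p5bar_adj.
Proof.
move=> n01 n12 n23 n34 a02 a03 a04 a13 a14 a24.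
set s := [:: t0; t1; t2; t3; t4].
(* Consecutive vertices are told apart by a third one; the other pairs are
   adjacent, hence distinct. *)
have d01 : t0 != t1 := separated_by a02 n12.
have d12 : t1 != t2 := separated_by a13 n23.
have d23 : t2 != t3 := separated_by a24 n34.
have d34 : t3 != t4 by rewrite eq_sym (separated_by (y := t3) (z := t2)) // adj_sym.
have s_uniq : uniq s by rewrite /= !inE !negb_or d01 d12 d23 d34 !adj_neq.
exists (fun i : 'I_5 => nth t0 s i); split.
  by move=> i j /eqP; rewrite nth_uniq // => /eqP /val_inj.
move=> [[|[|[|[|[|i]]]]] ?] [[|[|[|[|[|j]]]]] ?] //= _;
  rewrite /p5bar_adj /p5_adj /= ?(adj_sym t1 t0) ?(adj_sym t2 _) ?(adj_sym t3 _) ?(adj_sym t4 _);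
  by apply/negbTE || done.
Qed.

Lemma prime_mixed (A : {set T}) (w : T) :
  prime_graph adj -> 1 < #|A| -> w \notin A -> exists z, mixed adj z A.
Proof.
move=> [_ noHom] A_gt1 wA; apply: NNPP => noMixed; apply: (noHom A); split.
  rewrite A_gt1 -cardsT proper_card // properT.
  by apply: contraNneq wA => ->; rewrite inE.
by move=> z _ zA; apply: noMixed; exists z.
Qed.

Lemma mixed_anticonnected (A : {set T}) (z : T) :
  anticonnected adj A -> mixed adj z A ->
  exists a b, [/\ coadj_in adj A a b, adj z a & ~~ adj z b].
Proof.
move=> [_ conA] [_ [[a aA za] [b bA zb]]].
exact: connect_switch (conA a b aA bA) za zb.
Qed.

Lemma coadj_in_sym (A : {set T}) : symmetric (coadj_in adj A).
Proof. by move=> a b; rewrite /coadj_in eq_sym adj_sym; case: (a \in A); case: (b \in A). Qed.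

Definition anticomponent (C : {set T}) (x : T) : {set T} :=
  [set z | connect (coadj_in adj C) x z].

Lemma anticomponent_id (C : {set T}) (x : T) : x \in anticomponent C x.
Proof. by rewrite inE connect0. Qed.

Lemma anticomponent_closed (C : {set T}) (x a b : T) :
  a \in anticomponent C x -> coadj_in adj C a b -> b \in anticomponent C x.
Proof. by rewrite !inE => xa /connect1; apply: connect_trans. Qed.

(* An anticomponent of C based in C stays inside C, since every non-edge
   of G[C] has both ends in C. *)
Lemma anticomponent_sub (C : {set T}) (x : T) :
  x \in C -> anticomponent C x \subset C.
Proof.
move=> xC; apply/subsetP => z; rewrite inE => xz; apply: contraT => zC.
by have [a [b [/and4P [_ bC _ _] _ /negP []]]] := connect_switch xz xC zC.
Qed.

(* Anticomponents are anticonnected: walks from x along non-edges of G[C]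
   never leave the anticomponent, so they are walks in the complement of
   G[A]. *)
Lemma anticomponent_anticonnected (C : {set T}) (x : T) :
  x \in C -> anticonnected adj (anticomponent C x).
Proof.
set A := anticomponent C x => xC.
have xA : x \in A := anticomponent_id C x.
have fromx z : z \in A -> connect (coadj_in adj A) x z.
  rewrite inE => /(connect_restrict xA (@anticomponent_closed C x)).
  apply: connect_sub => a b /and3P [aA bA /and4P [_ _ ab nab]].
  by apply: connect1; rewrite /coadj_in aA bA ab nab.
split; first by apply/set0Pn; exists x.
move=> a b aA bA; apply: connect_trans (fromx b bA).
by rewrite (sym_connect_sym (coadj_in_sym A)) fromx.
Qed.

(* A vertex mixed on an anticomponent of C does not belong to C: it would be
   joined to the anticomponent by a non-edge of G[C]. *)
Lemma anticomponent_mixed_notin (C : {set T}) (x z : T) :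
  x \in C -> mixed adj z (anticomponent C x) -> z \notin C.
Proof.
move=> xC [zA [_ [b bA nzb]]]; have bC := subsetP (anticomponent_sub xC) b bA.
have nebz : b != z by apply: contraNneq zA => <-.
apply: contra zA => zC; apply: anticomponent_closed bA _.
by rewrite /coadj_in bC zC nebz adj_sym nzb.
Qed.

Lemma not_clique_coedge (C : {set T}) :
  ~ is_clique adj C -> exists x y, [/\ x \in C, y \in C, x != y & ~~ adj x y].
Proof.
move=> nclique; apply: NNPP => noCoedge; apply: nclique => x y xC yC nexy.
by apply: contraT => nxy; case: noCoedge; exists x, y.
Qed.

(* If z were
   adjacent to u but not to v, then a-b-z-v-u would be the complement of an
   induced P5. *)
Lemma p5bar_free_coedge (u v a b z : T) :
  P5bar_free adj -> ~~ adj u v ->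
  adj u a -> adj v a -> adj u b -> adj v b -> ~~ adj a b ->
  adj z a -> ~~ adj z b -> adj u z -> adj v z.
Proof.
move=> noP5 nuv ua va ub vb nab za nzb uz; apply: contraT => nvz; case: noP5.
by apply: (@p5bar_of_copath a b z v u); rewrite // adj_sym.
Qed.

Lemma common_nbhd_mixed_far (u v x z : T) :
  P5bar_free adj -> ~~ adj u v -> x \in nbhd adj u :&: nbhd adj v ->
  mixed adj z (anticomponent (nbhd adj u :&: nbhd adj v) x) ->
  z \notin nbhd adj u :|: nbhd adj v :|: [set u; v].
Proof.
set C := nbhd adj u :&: nbhd adj v => noP5 nuv xC zmix.
have [a [b [/and4P [aA bA _ nab] za nzb]]] :=
  mixed_anticonnected (anticomponent_anticonnected xC) zmix.
have zC : z \notin C := anticomponent_mixed_notin xC zmix.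
have AC := subsetP (anticomponent_sub xC).
move: (AC a aA) (AC b bA) zC; rewrite !inE => /andP [ua va] /andP [ub vb] zC.
have one_sided := p5bar_free_coedge noP5 _ _ _ _ _ nab za nzb.
have nuz : ~~ adj u z by apply: contra zC => uz; rewrite uz (one_sided u v).
have nvz : ~~ adj v z by apply: contra zC => vz; rewrite vz (one_sided v u) // adj_sym.
rewrite (negbTE nuz) (negbTE nvz) !(eq_sym z) /=.
by apply/norP; split; [exact: separated_by ub nzb | exact: separated_by vb nzb].
Qed.

End Graph.

Theorem lemma2p8 (T : finType) (adj : rel T) (u v : T) :
  simple_graph adj -> prime_graph adj -> P5bar_free adj ->
  u != v -> ~~ adj u v ->
  is_clique adj (nbhd adj u :&: nbhd adj v) \/
  exists w : T, exists A : {set T},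
    w \notin (nbhd adj u :|: nbhd adj v :|: [set u; v]) /\
    A \subset (nbhd adj u :&: nbhd adj v) /\
    anticonnected adj A /\ mixed adj w A.
Proof.
move=> [sym irr] prime noP5 _ nuv; set C := nbhd adj u :&: nbhd adj v.
have [|/not_clique_coedge [x [y [xC yC nexy nxy]]]] := classic (is_clique adj C).
  by left.
right; set A := anticomponent adj C x.
have AC : A \subset C := anticomponent_sub adj xC.
have xA : x \in A := anticomponent_id adj C x.
have yA : y \in A by apply: anticomponent_closed xA _; rewrite /coadj_in xC yC nexy.
have [z zmix] : exists z, mixed adj z A.
  apply: (prime_mixed (w := u)) prime _ _; first by apply/card_gt1P; exists x, y.
  by apply/negP => /(subsetP AC); rewrite !inE irr.
have acA : anticonnected adj A := anticomponent_anticonnected sym xC.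
have farz := common_nbhd_mixed_far sym irr noP5 nuv xC zmix.
by exists z, A.
Qed.
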